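(* Let $v\equiv u\equiv 2$ or $5\pmod 6$, let $c<\binom u3$, and let $(u,c)$ satisfy (C1) with associated pair $(\lambda,\varepsilon)$. Suppose $(U,\mathcal F)$ is an NWBTS$(u;c)$ and $(V,\mathcal F')$ is a simple GDD$_\lambda(2,3,v)$ of type $1^{v-u}u^1$ with long group $U\subset V$. Then $(V,\mathcal F\cup\mathcal F')$ is an NWBTS$(v;b)$ where $3b=\lambda\binom v2+\varepsilon$.
   Context: A GDD$_\lambda(2,3,v)$ of type $1^{v-u}u^1$ with long group $U$ on a $v$-set $V\supseteq U$, $|U|=u$, is a family of 3-subsets of $V$ such that no block contains two points of $U$ and every pair of points of $V$ not contained in $U$ lies in exactly $\lambda$ blocks; simple means no repeated blocks. A triple system TS$(v;b)$ is a pair $(V,\mathcal F)$, $V$ a set of $v\ge3$ points, $\mathcal F$ a multiset of $b$ 3-subsets (blocks); simple if no repeated block. $\lambda_{x_1,\dots,x_j}$ is the number of blocks containing $\{x_1,\dots,x_j\}$; $j$-balanced means $|\lambda_{x_1,\dots,x_j}-\lambda_{y_1,\dots,y_j}|\le1$ for all $j$-subsets. Associated pair $(\lambda,\varepsilon)$ of $(v,b)$: $3b=\lambda\binom v2+\varepsilon$, $-v/2<\varepsilon<v/2$. (C1): $v\equiv 2\pmod 3$ and $b\in\{\lfloor \lambda v(v-1)/6\rfloor,\lceil \lambda v(v-1)/6\rceil\}$ with $\lambda\equiv1,2\pmod 3$ if $v\equiv5\pmod6$ and $\lambda\equiv 2,4\pmod 6$ if $v\equiv2\pmod 6$ ($\lambda$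 being that of the associated pair; then $\varepsilon\in\{\pm1,\pm2\}$). Defect graph (when all $\lambda_{x,y}\in\{\lambda-1,\lambda,\lambda+1\}$): graph with edges of pairs with $\lambda_{x,y}=\lambda+1$ (label $+1$) or $\lambda-1$ (label $-1$); isomorphisms preserve labels. $G_{\pm1}$: triangle with two $\pm1$ edges and one $\mp1$ edge; $G_{\pm2}$: 4-cycle with three $\pm1$ edges and one $\mp1$ edge. Under (C1), a TS is nearly 2-balanced if all $\lambda_{x,y}\in\{\lambda-1,\lambda,\lambda+1\}$ and its defect graph is isomorphic to $G_\varepsilon$; an NWBTS$(v;b)$ is a nearly 2-balanced 3-balanced TS$(v;b)$. *)

From mathcomp Require Import all_boot all_order all_algebra.
Set Implicit Arguments. Unset Strict Implicit. Unset Printing Implicit Defensive.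
Import Order.TTheory GRing.Theory Num.Theory.

(* Points: a finite type T; point sets are {set T}; a (multi)set of blocks is
   a sequence of sets (repetitions allowed = multiset). *)

Section TS.
Variable T : finType.

Definition lamS (B : seq {set T}) (S : {set T}) : nat :=
  count (fun b : {set T} => S \subset b) B.

Definition is_TS (P : {set T}) (B : seq {set T}) : Prop :=
  3 <= #|P| /\ (forall b, b \in B -> b \subset P /\ #|b| = 3).

Definition j_balanced (j : nat) (P : {set T}) (B : seq {set T}) : Prop :=
  forall S1 S2 : {set T}, S1 \subset P -> S2 \subset P ->
    #|S1| = j -> #|S2| = j -> lamS B S1 <= lamS B S2 + 1.

Definition assoc_pair (v b lam : nat) (eps : int) : Prop :=
  ((3 * b)%:Z = (lam * 'C(v, 2))%:Z + eps)%R /\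
  (- (v%:Z) < 2 * eps)%R /\ (2 * eps < v%:Z)%R.

Definition C1 (v b : nat) : Prop :=
  exists lam eps, assoc_pair v b lam eps /\
    v %% 3 = 2 /\
    (b = (lam * v * (v - 1)) %/ 6 \/ b = (lam * v * (v - 1) + 5) %/ 6) /\
    (v %% 6 = 5 -> lam %% 3 = 1 \/ lam %% 3 = 2) /\
    (v %% 6 = 2 -> lam %% 6 = 2 \/ lam %% 6 = 4).

Definition defect (B : seq {set T}) (lam : nat) (x y : T) : int :=
  ((lamS B [set x; y])%:Z - lam%:Z)%R.

(* The defect graph (edges = pairs with nonzero defect, labelled by it) is
   isomorphic (as an edge-labelled graph) to the graph on 'I_n with labels gl
   (gl i j = 0 meaning no edge). *)
Definition defect_iso (P : {set T}) (B : seq {set T}) (lam n : nat)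
    (gl : 'I_n -> 'I_n -> int) : Prop :=
  exists f : 'I_n -> T,
    injective f /\ (forall i, f i \in P) /\
    (forall i j, i != j -> defect B lam (f i) (f j) = gl i j) /\
    (forall x y, x \in P -> y \in P -> x != y -> defect B lam x y != 0%R ->
       exists i j, x = f i /\ y = f j).

End TS.

(* G_{+-1}: triangle with two (+-1) edges {0,1},{1,2} and one (-+1) edge {0,2} *)
Definition tri_label (s : int) (i j : 'I_3) : int :=
  if i == j then 0%R else if (i + j == 2)%N then (- s)%R else s.

(* G_{+-2}: 4-cycle 0-1-2-3-0, edges {0,1},{1,2},{2,3} labelled s, {3,0} labelled -s *)
Definition cyc_label (s : int) (i j : 'I_4) : int :=
  if (i.+1 == j %[mod 4]) || (j.+1 == i %[mod 4]) then
    (if (minn i j == 0) && (maxn i j == 3) then (- s)%R else s)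
  else 0%R.

Definition defect_iso_G (T : finType) (P : {set T}) (B : seq {set T})
    (lam : nat) (eps : int) : Prop :=
  if eps == 1%R then defect_iso P B lam (tri_label 1)
  else if eps == (-1)%R then defect_iso P B lam (tri_label (-1))
  else if eps == 2%R then defect_iso P B lam (cyc_label 1)
  else if eps == (-2)%R then defect_iso P B lam (cyc_label (-1))
  else False.

Definition nearly_2_balanced (T : finType) (P : {set T}) (B : seq {set T}) : Prop :=
  C1 #|P| (size B) /\
  exists lam eps, assoc_pair #|P| (size B) lam eps /\
    (forall x y, x \in P -> y \in P -> x != y ->
       lam.-1 <= lamS B [set x; y] <= lam.+1) /\
    defect_iso_G P B lam eps.

Definition NWBTS (T : finType) (P : {set T}) (B : seq {set T}) : Prop :=
  is_TS P B /\ nearly_2_balanced P B /\ j_balanced 3 P B.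

Definition simple_GDD (T : finType) (lam : nat) (V U : {set T}) (B : seq {set T}) : Prop :=
  U \subset V /\ uniq B /\
  (forall b, b \in B -> b \subset V /\ #|b| = 3 /\ #|b :&: U| <= 1) /\
  (forall x y, x \in V -> y \in V -> x != y -> ~~ ((x \in U) && (y \in U)) ->
     lamS B [set x; y] = lam).

From mathcomp Require Import all_boot all_order all_algebra.
From mathcomp Require Import zify.
Set Implicit Arguments. Unset Strict Implicit. Unset Printing Implicit Defensive.
Import Order.TTheory GRing.Theory Num.Theory.

(* Write B = F ++ F'.  Multiplicities of B are computed separately on F and F':
   - pairs: F' covers no pair inside U and every other pair of V exactly lam
     times, while F lives inside U; so B agrees with F on pairs of U and has
     multiplicity lam elsewhere.  Hence the pair range and the defect graph of F
     transfer verbatim to B (section DefectTransfer).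
   - triples: since c < C(u,3), double counting yields a triple of U missed by
     F; 3-balance of F then bounds every triple of U by 1.  Triples leaving U
     lie only in blocks of the simple design F', so they too occur at most once,
     and B is 3-balanced.
   - size: counting pairs of V through the GDD gives 3|F'| + lam C(u,2) =
     lam C(v,2), so 3|B| = lam C(v,2) + eps.  Since (C1) for (u,c) forces
     |eps| <= 2 and v = u (mod 6), (C1) holds for (v,|B|) with the same pair
     (lam, eps) (lemma C1_extend). *)

Section Multiplicities.
Variable T : finType.
Implicit Types (B : seq {set T}) (A P S : {set T}).

Definition ksubsets A k : {set {set T}} := [set p : {set T} | p \subset A & #|p| == k].

Lemma lamS_cat B1 B2 S : lamS (B1 ++ B2) S = lamS B1 S + lamS B2 S.
Proof. exact: count_cat. Qed.

Lemma lamS_eq0 B S : (forall b, b \in B -> ~~ (S \subset b)) -> lamS B S = 0.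
Proof. by move=> hB; apply/eqP; rewrite -leqn0 leqNgt -has_count; apply/hasPn. Qed.

Lemma pair_subset x y A : ([set x; y] \subset A) = (x \in A) && (y \in A).
Proof. by rewrite subUset !sub1set. Qed.

Lemma lamS_outside A B S :
  (forall b, b \in B -> b \subset A) -> ~~ (S \subset A) -> lamS B S = 0.
Proof.
move=> hB nSA; apply: lamS_eq0 => b /hB bA; apply: contra nSA => Sb.
exact: subset_trans Sb bA.
Qed.

Lemma lamS_block_le1 B S m :
  uniq B -> (forall b, b \in B -> #|b| = m) -> #|S| = m -> lamS B S <= 1.
Proof.
move=> uB hB Sm; rewrite /lamS (eq_in_count (a2 := pred1 S)).
  by rewrite count_uniq_mem // leq_b1.
move=> b bB /=; apply/idP/idP => [Sb|/eqP -> //].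
by rewrite eq_sym eqEcard Sb (hB b bB) Sm leqnn.
Qed.

(* Double counting: each block of size m contains C(m,k) of the k-subsets. *)
Lemma sum_lamS_ksubsets A B m k :
  (forall b, b \in B -> b \subset A /\ #|b| = m) ->
  \sum_(p in ksubsets A k) lamS B p = 'C(m, k) * size B.
Proof.
elim: B => [|b B IH] hB; first by rewrite big1 ?muln0.
have [bA bm] := hB b (mem_head b B).
rewrite /= mulnS -IH => [|b' b'B]; last by apply: hB; rewrite inE b'B orbT.
rewrite big_split /=; congr (_ + _).
rewrite -bm -cards_draws -sum1_card big_mkcond [RHS]big_mkcond /=.
apply: eq_bigr => p _; rewrite !inE.
by case pb: (p \subset b); rewrite ?(subset_trans pb bA) /=; case: ifP.
Qed.

Lemma uncovered_ksubset A B m k :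
  (forall b, b \in B -> b \subset A /\ #|b| = m) ->
  'C(m, k) * size B < 'C(#|A|, k) -> exists2 S, S \in ksubsets A k & lamS B S = 0.
Proof.
move=> hB; rewrite -(sum_lamS_ksubsets k hB) -cards_draws -sum1_card => hlt.
suff /exists_inP [S SA /eqP S0] : [exists S in ksubsets A k, lamS B S == 0].
  by exists S.
apply: contraTT hlt => /exists_inPn hpos; rewrite -leqNgt.
by apply: leq_sum => S /hpos; rewrite lt0n.
Qed.

Lemma balanced_le1 j P B S0 :
  j_balanced j P B -> S0 \in ksubsets P j -> lamS B S0 = 0 ->
  forall S, S \subset P -> #|S| = j -> lamS B S <= 1.
Proof.
rewrite inE => hbal /andP [S0P /eqP S0j] S00 S SP Sj.
by have := hbal S S0 SP S0P Sj S0j; rewrite S00.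
Qed.

Lemma le1_balanced j P B :
  (forall S, S \subset P -> #|S| = j -> lamS B S <= 1) -> j_balanced j P B.
Proof. by move=> hle S1 S2 S1P _ S1j _; rewrite (leq_trans (hle S1 S1P S1j)) ?leq_addl. Qed.

End Multiplicities.

Section GDD.
Variables (T : finType) (lam : nat) (V U : {set T}) (F' : seq {set T}).
Hypothesis gdd : simple_GDD lam V U F'.

(* A GDD block meets the long group in at most one point, so no set of two or
   more points of U is covered. *)
Lemma gdd_lamS_long (S : {set T}) : S \subset U -> 1 < #|S| -> lamS F' S = 0.
Proof.
have [_ [_ [hb _]]] := gdd; move=> SU S2; apply: lamS_eq0 => b /hb [_ [_ b1]].
apply: contraTN S2 => Sb; rewrite -leqNgt (leq_trans _ b1) //.
by rewrite subset_leq_card // subsetI Sb.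
Qed.

Lemma gdd_count : 3 * size F' + lam * 'C(#|U|, 2) = lam * 'C(#|V|, 2).
Proof.
have [UV [_ [hb hpair]]] := gdd.
have hb' b : b \in F' -> b \subset V /\ #|b| = 3 by case/hb => ? [].
have inU p : (p \in ksubsets V 2) && (p \subset U) = (p \in ksubsets U 2).
  by rewrite !inE; case pU: (p \subset U); rewrite ?andbF ?andbT // (subset_trans pU UV).
have hsum := sum_lamS_ksubsets 2 hb'.
rewrite (bigID (fun p : {set T} => p \subset U)) /= (eq_bigl _ _ inU) big1 in hsum; last first.
  by move=> p; rewrite inE => /andP [pU /eqP p2]; rewrite gdd_lamS_long ?p2.
rewrite (eq_bigr (fun=> lam * 1)) -?big_distrr /= in hsum; last first.
  move=> p /andP []; rewrite inE => /andP [pV /cards2P [x [y [xy pE]]]] nU; subst p.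
  by move: pV; rewrite muln1 pair_subset => /andP [xV yV]; apply: hpair; rewrite -?pair_subset.
have htot : \sum_(p in ksubsets V 2) 1 = 'C(#|V|, 2) by rewrite sum1_card cards_draws.
rewrite (bigID (fun p : {set T} => p \subset U)) /= in htot.
rewrite (eq_bigl _ _ inU) sum1_card cards_draws in htot.
by rewrite -htot -hsum /= mulnDr addnC.
Qed.

Variable F : seq {set T}.
Hypothesis F_in_U : forall b, b \in F -> b \subset U.

Lemma union_pair_inside x y : x \in U -> y \in U -> x != y ->
  lamS (F ++ F') [set x; y] = lamS F [set x; y].
Proof.
move=> xU yU xy.
by rewrite lamS_cat gdd_lamS_long ?addn0 ?pair_subset ?xU ?cards2 ?xy.
Qed.

Lemma union_pair_outside x y : x \in V -> y \in V -> x != y ->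
  ~~ ((x \in U) && (y \in U)) -> lamS (F ++ F') [set x; y] = lam.
Proof.
have [_ [_ [_ hpair]]] := gdd; move=> xV yV xy nU.
by rewrite lamS_cat (lamS_outside F_in_U) ?pair_subset // hpair.
Qed.

(* Triples inside U come from F only, the others from the simple GDD only. *)
Lemma union_triples_le1 :
  (forall S : {set T}, S \subset U -> #|S| = 3 -> lamS F S <= 1) ->
  forall S : {set T}, S \subset V -> #|S| = 3 -> lamS (F ++ F') S <= 1.
Proof.
have [_ [uF' [hb _]]] := gdd; move=> hF S SV S3; rewrite lamS_cat.
have [SU|nSU] := boolP (S \subset U).
  by rewrite gdd_lamS_long ?S3 ?addn0 ?hF.
by rewrite (lamS_outside F_in_U nSU) (lamS_block_le1 (m := 3) uF') // => b /hb [_ []].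
Qed.

End GDD.

Section DefectTransfer.
Variables (T : finType) (P Q : {set T}) (B B' : seq {set T}) (lam : nat).
Hypothesis PQ : P \subset Q.
Hypothesis agree : forall x y, x \in P -> y \in P -> x != y ->
  lamS B' [set x; y] = lamS B [set x; y].
Hypothesis outside : forall x y, x \in Q -> y \in Q -> x != y ->
  ~~ ((x \in P) && (y \in P)) -> lamS B' [set x; y] = lam.

Lemma pair_range_extend :
  (forall x y, x \in P -> y \in P -> x != y -> lam.-1 <= lamS B [set x; y] <= lam.+1) ->
  forall x y, x \in Q -> y \in Q -> x != y -> lam.-1 <= lamS B' [set x; y] <= lam.+1.
Proof.
move=> hrng x y xQ yQ xy; have [/andP [xP yP]|nP] := boolP ((x \in P) && (y \in P)).
  by rewrite agree ?hrng.
by rewrite outside // leq_pred leqnSn.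
Qed.

(* The defect graph of B' is that of B: new pairs have defect 0. *)
Lemma defect_iso_extend n (gl : 'I_n -> 'I_n -> int) :
  defect_iso P B lam gl -> defect_iso Q B' lam gl.
Proof.
move=> [f [finj [fP [fgl fall]]]]; have fQ i : f i \in Q by apply: (subsetP PQ).
exists f; do !split=> //.
  by move=> i j ij; rewrite -fgl // /defect agree // (inj_eq finj).
move=> x y xQ yQ xy; have [/andP [xP yP]|nP] := boolP ((x \in P) && (y \in P)).
  by rewrite /defect agree //; apply: fall.
by rewrite /defect outside // subrr eqxx.
Qed.

Lemma defect_iso_G_extend eps : defect_iso_G P B lam eps -> defect_iso_G Q B' lam eps.
Proof. by rewrite /defect_iso_G; do !case: ifP => _ //; apply: defect_iso_extend. Qed.

End DefectTransfer.

Lemma double_bin2 n : n * (n - 1) = 2 * 'C(n, 2).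
Proof. by rewrite -mul_bin_diag bin1 subn1. Qed.

(* The associated pair is unique: eps is determined modulo C(n,2) >= n. *)
Lemma assoc_pair_uniq n b l1 e1 l2 e2 : 3 <= n ->
  assoc_pair n b l1 e1 -> assoc_pair n b l2 e2 -> l1 = l2 /\ e1 = e2.
Proof.
move=> n3 [h1 [h2 h3]] [h4 [h5 h6]]; have := double_bin2 n.
move: h1 h4; rewrite !PoszD !PoszM; move: 'C(n, 2) => K h1 h4 hK.
have Kn : n <= K by nia.
have l12 : l1 = l2 by nia.
by subst l2; split=> //; lia.
Qed.

Lemma C1_quotient_iff n b lam eps : assoc_pair n b lam eps ->
  (b = lam * n * (n - 1) %/ 6 \/ b = (lam * n * (n - 1) + 5) %/ 6) <->
  (-2 <= eps <= 2)%R.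
Proof.
rewrite -mulnA double_bin2 mulnCA => -[+ _]; move: (lam * 'C(n, 2)) => X.
lia.
Qed.

Lemma C1_extend u v c b lam eps : 3 <= u -> u <= v -> v = u %[mod 6] ->
  C1 u c -> assoc_pair u c lam eps ->
  ((3 * b)%:Z = (lam * 'C(v, 2))%:Z + eps)%R ->
  C1 v b /\ assoc_pair v b lam eps.
Proof.
move=> u3 uv vu6 [l [e [hap' [u3m [hq hlam]]]]] hap heq.
have [el ee] := assoc_pair_uniq u3 hap' hap; subst l e.
have hapv : assoc_pair v b lam eps by case: hap => _ [? ?]; split; lia.
have eps2 := (C1_quotient_iff hap').1 hq.
split=> //; exists lam, eps; do !split=> //; first lia.
  exact: (C1_quotient_iff hapv).2.
all: by rewrite vu6; case: hlam.
Qed.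

Theorem lemma3p2 (T : finType) (V U : {set T}) (u v c lam : nat) (eps : int)
  (F F' : seq {set T}) :
  #|V| = v -> #|U| = u ->
  v = u %[mod 6] -> (u %% 6 = 2 \/ u %% 6 = 5) ->
  c < 'C(u, 3) ->
  C1 u c -> assoc_pair u c lam eps ->
  size F = c ->
  NWBTS U F ->
  simple_GDD lam V U F' ->
  NWBTS V (F ++ F') /\
  ((3 * size (F ++ F'))%:Z = (lam * 'C(v, 2))%:Z + eps)%R.
Proof.
move=> hV hU vu6 _ hc hC1 hap hsize [[hU3 hFb] [[_ [l [e [hap0 [hrng hiso]]]]] hbal]] gdd.
have u3 : 3 <= u by rewrite -hU.
rewrite hU hsize in hap0; have [el ee] := assoc_pair_uniq u3 hap0 hap; subst l e.
have [UV [_ [F'b _]]] := gdd; have uv : u <= v by rewrite -hU -hV subset_leq_card.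
have F_in_U b : b \in F -> b \subset U by case/hFb.
have heq : ((3 * size (F ++ F'))%:Z = (lam * 'C(v, 2))%:Z + eps)%R.
  have := gdd_count gdd; case: hap; rewrite size_cat hU hV hsize.
  move: (lam * _) (lam * _) => X Y; lia.
have [hC1v hapv] := C1_extend u3 uv vu6 hC1 hap heq.
have agree := union_pair_inside gdd F; have outside := union_pair_outside gdd F_in_U.
split=> //; split; [split | split].
- by rewrite (leq_trans hU3) ?subset_leq_card.
- move=> b; rewrite mem_cat => /orP [/hFb [bU b3] | /F'b [? []]] //.
  by rewrite (subset_trans bU UV).
- split; first by rewrite hV.
  exists lam, eps; split; first by rewrite hV.
  by split; [apply: pair_range_extend hrng | apply: defect_iso_G_extend hiso].
- have [S0 S0U S00] : exists2 S0, S0 \in ksubsets U 3 & lamS F S0 = 0.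
    by apply: uncovered_ksubset hFb _; rewrite binn mul1n hsize hU.
  apply/le1_balanced/(union_triples_le1 gdd F_in_U).
  exact: balanced_le1 hbal S0U S00.
Qed.
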